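(* Let $G$ be a finite simple connected graph that is simply connected, and let $v_0\in V(G)$. Then the cluster graph $\mathcal{C}(G)$ of $G$ with respect to $v_0$ is a tree.
   Context: For $i\ge 0$ let $S^i=\{v\in V(G): d(v_0,v)=i\}$ (graph distance). The clusters of $G$ with respect to $v_0$ are the vertex sets of the connected components of the induced subgraphs $G[S^i]$, $i\ge 0$; i.e. two vertices $u,v\in S^i$ are in the same cluster iff there is a path from $u$ to $v$ all of whose vertices lie in $S^i$. The cluster graph $\mathcal{C}(G)$ has the clusters as vertices, and two distinct clusters $C,C'$ are adjacent iff there exist $v\in C$, $v'\in C'$ with $vv'\in E(G)$. A loop in $G$ is a finite sequence of vertices $(v_0,\dots,v_k)$ with, for each $i<k$, $v_iv_{i+1}\in E(G)$ or $v_i=v_{i+1}$. Two loops $(v_0,\dots,v_{i-1},v_i,v_{i+1},\dots,v_k)$ and $(v_0,\dots,v_{i-1},v_{i+1},\dots,v_k)$ are related by an elementary homotopy (in either direction) if $v_i=v_{i+1}$, or $v_{i-1}=v_{i+1}$, or $v_{i-1}v_{i+1}\in E(G)$. A loop is contractible if it can be reduced to a single vertex by a finite sequence of elementary homotopies; $G$ is simply connected if every loop is contractible. *)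

From mathcomp Require Import ssreflect ssrfun ssrbool eqtype ssrnat seq path choice fintype tuple finset fingraph.
Set Implicit Arguments. Unset Strict Implicit. Unset Printing Implicit Defensive.

Section Graphs.
Variable T : finType.
Implicit Types (e : rel T) (x y : T).

Definition simple_graph e := symmetric e /\ irreflexive e.
Definition connected_graph e := forall x y, connect e x y.

Definition walk_len e n x y : bool :=
  [exists p : n.-tuple T, path e x p && (last x p == y)].

(* graph distance d(x,y): least length of a walk from x to y
   (a shortest walk has length < #|T|; default #|T| if unreachable) *)
Definition dist e x y : nat := find (fun n => walk_len e n x y) (iota 0 #|T|).

(* edges of the induced subgraph G[S^i] for the level sets S^i *)
Definition level_rel e v0 : rel T :=
  [rel x y | e x y && (dist e v0 x == dist e v0 y)].

Definition same_cluster e v0 x y : bool := connect (level_rel e v0) x y.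

Definition is_cluster e v0 (C : {set T}) : bool :=
  [exists x, C == [set y | same_cluster e v0 x y]].

Definition cluster e v0 := {C : {set T} | is_cluster e v0 C}.

Definition cluster_adj e v0 : rel (cluster e v0) :=
  fun C C' => (C != C') &&
    [exists u, exists v, [&& u \in val C, v \in val C' & e u v]].

Definition lstep e : rel T := fun x y => (x == y) || e x y.
Definition is_loop e (s : seq T) : Prop :=
  exists x p, s = x :: p /\ path (lstep e) x p /\ last x p = x.

(* one elementary homotopy (removal direction) *)
Inductive elem_red e : seq T -> seq T -> Prop :=
| ER_dup a x b : elem_red e (a ++ x :: x :: b) (a ++ x :: b)
| ER_tri a u x w b : (u == w) || e u w ->
    elem_red e (a ++ u :: x :: w :: b) (a ++ u :: w :: b).

Definition elem_homotopy e (s t : seq T) : Prop :=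
  is_loop e s /\ is_loop e t /\ (elem_red e s t \/ elem_red e t s).

Inductive homotopic e : seq T -> seq T -> Prop :=
| H_refl s : homotopic e s s
| H_step s t u : elem_homotopy e s t -> homotopic e t u -> homotopic e s u.

Definition contractible e (s : seq T) : Prop := exists v, homotopic e s [:: v].

Definition simply_connected e : Prop :=
  forall s, is_loop e s -> contractible e s.
End Graphs.
Arguments cluster_adj {T} e v0.

Section Trees.
Variable S : finType.
Definition has_graph_cycle (r : rel S) : Prop :=
  exists p : seq S, [/\ 3 <= size p, uniq p & cycle r p].
Definition is_tree (r : rel S) : Prop :=
  (forall x y, connect r x y) /\ ~ has_graph_cycle r.
End Trees.

From mathcomp Require Import ssreflect ssrfun ssrbool eqtype ssrnat seq path choice fintype tuple finset fingraph.
From mathcomp Require Import ssralg ssrint zify.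
Set Implicit Arguments. Unset Strict Implicit. Unset Printing Implicit Defensive.
Import GRing.Theory.

(* Fix a directed edge (A, B) of the cluster graph and let the flow of a loop
   be the number of its steps from cluster A to cluster B minus the number of
   steps from B to A.  Two adjacent vertices have distances from v0 differing
   by at most one, so among three pairwise adjacent vertices two lie at the
   same distance, hence in the same cluster; an elementary homotopy therefore
   never changes the flow, and contractible loops have flow 0.  A cycle
   C1 C2 ... Ck C1 of the cluster graph lifts to a loop of G crossing from C1
   to C2 exactly once and never back, i.e. of flow 1.  The cluster graph is
   connected because G is. *)

Local Open Scope ring_scope.

Section NetFlow.
Variables (X : eqType) (A B : X).

Definition flow (P Q : X) : int :=
  ((P == A) && (Q == B))%:Z - ((P == B) && (Q == A))%:Z.

Lemma flowxx P : flow P P = 0.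
Proof. by rewrite /flow andbC subrr. Qed.

Lemma flow_swap P Q : flow Q P = - flow P Q.
Proof. by rewrite /flow opprB andbC [(Q == B) && _]andbC. Qed.

Lemma flow_degenerate P Q R :
  [\/ P = R, P = Q | Q = R] -> flow P Q + flow Q R = flow P R.
Proof.
by case=> <-; rewrite ?flowxx ?add0r ?addr0 // flow_swap addNr.
Qed.

Fixpoint net_flow (x : X) (p : seq X) : int :=
  if p is y :: q then flow x y + net_flow y q else 0.

Lemma net_flow_cat x p q :
  net_flow x (p ++ q) = net_flow x p + net_flow (last x p) q.
Proof. by elim: p x => [|y p IH] x /=; rewrite ?add0r // IH addrA. Qed.

Lemma net_flow_const x p : all (pred1 x) p -> net_flow x p = 0.
Proof.
by elim: p => [|y p IH] //= /andP[/eqP-> /IH->]; rewrite flowxx addr0.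
Qed.

(* every nonzero term of the flow has B as one of its endpoints *)
Lemma net_flow_notin x p : B \notin x :: p -> net_flow x p = 0.
Proof.
elim: p x => [|y p IH] x //; rewrite !inE !negb_or => /and3P[xB yB pB].
rewrite /= IH ?inE ?negb_or ?yB // /flow (eq_sym x B) (eq_sym y B).
by rewrite (negbTE xB) (negbTE yB) andbF addr0.
Qed.

Definition seq_flow (s : seq X) : int :=
  if s is x :: p then net_flow x p else 0.

Lemma seq_flow_splice a y q q' : net_flow y q = net_flow y q' ->
  seq_flow (a ++ y :: q) = seq_flow (a ++ y :: q').
Proof.
by case: a => [|x a] Eq //=; rewrite !net_flow_cat /= Eq.
Qed.

End NetFlow.

Lemma net_flow_cycle (X : eqType) (C1 C2 C3 : X) (ps : seq X) :
  uniq [:: C1, C2, C3 & ps] -> net_flow C1 C2 C1 (rcons [:: C2, C3 & ps] C1) = 1.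
Proof.
rewrite /= !inE !negb_or => /and3P[/and3P[C12 C13 _] /andP[C23 C2ps] _].
rewrite net_flow_notin; last first.
  by rewrite inE mem_rcons !inE (negbTE C23) eq_sym (negbTE C12) (negbTE C2ps).
rewrite /flow !eqxx (negbTE C12) (eq_sym C2 C1) (negbTE C12) (eq_sym C3 C1).
by rewrite (negbTE C13) !andbF.
Qed.

Section HomotopyInvariance.
Variables (T : finType) (e : rel T) (X : eqType) (f : T -> X).

Definition collapses_triangles := forall u x w,
  lstep e u x -> lstep e x w -> lstep e u w ->
  [\/ f u = f w, f u = f x | f x = f w].

Hypothesis f_collapses : collapses_triangles.

Lemma loop_sorted s : is_loop e s -> sorted (lstep e) s.
Proof. by case=> x [p [-> [Hp _]]]. Qed.

Lemma elem_red_seq_flow A B s t : is_loop e s -> elem_red e s t ->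
  seq_flow A B (map f s) = seq_flow A B (map f t).
Proof.
move=> /loop_sorted + R; case: R => [a x b | a u x w b uw] Ls; rewrite !map_cat /=.
  by apply: seq_flow_splice => /=; rewrite flowxx add0r.
apply: seq_flow_splice => /=; rewrite addrA flow_degenerate //.
move: Ls; rewrite sorted_cat_cons /= => /andP[_ /and3P[ux xw _]].
exact: f_collapses.
Qed.

Lemma homotopic_seq_flow A B s t : homotopic e s t ->
  seq_flow A B (map f s) = seq_flow A B (map f t).
Proof.
elim=> // {}s {}t u [Ls [Lt [R|R]]] _ <-.
  exact: elem_red_seq_flow.
by rewrite (elem_red_seq_flow A B Lt R).
Qed.

Lemma contractible_seq_flow A B s : contractible e s ->
  seq_flow A B (map f s) = 0.
Proof. by case=> v /(homotopic_seq_flow A B). Qed.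

End HomotopyInvariance.

Lemma find_iota_le (P : pred nat) N k : P k -> (find P (iota 0 N) <= k)%N.
Proof.
move=> Pk; case: (ltnP k N) => kN.
  rewrite leqNgt; apply/negP => /(before_find 0).
  by rewrite nth_iota // add0n Pk.
by apply: leq_trans (find_size _ _) _; rewrite size_iota.
Qed.

Section Clusters.
Variables (T : finType) (e : rel T) (v0 : T).
Hypothesis e_sym : symmetric e.
Hypothesis e_conn : connected_graph e.

Lemma walk_lenP n x y :
  reflect (exists p, [/\ size p = n, path e x p & last x p = y]) (walk_len e n x y).
Proof.
apply: (iffP existsP) => [[p /andP[Hp /eqP Hl]]|[p [<- Hp Hl]]].
  by exists p; rewrite size_tuple.
by exists (in_tuple p); rewrite /= Hp Hl eqxx.
Qed.

Lemma walk_len_dist x y : walk_len e (dist e x y) x y.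
Proof.
have /connectP[p /shortenP[p' p'_path p'_uniq _] ->] := e_conn x y.
have p'_small : (size p' < #|T|)%N.
  by have := max_card (mem (x :: p')); rewrite (card_uniqP p'_uniq).
have has_walk : has (fun n => walk_len e n x (last x p')) (iota 0 #|T|).
  by apply/hasP; exists (size p'); rewrite ?mem_iota //; apply/walk_lenP; exists p'.
have := nth_find 0 has_walk; rewrite /dist nth_iota ?add0n //.
by move: has_walk; rewrite has_find size_iota.
Qed.

Lemma dist_edge_le a b : e a b -> (dist e v0 b <= (dist e v0 a).+1)%N.
Proof.
move=> eab; apply: find_iota_le.
have /walk_lenP[p [Hs Hp Hl]] := walk_len_dist v0 a.
apply/walk_lenP; exists (rcons p b).
by rewrite size_rcons Hs rcons_path Hp Hl last_rcons.
Qed.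

Lemma same_cluster_sym : connect_sym (level_rel e v0).
Proof. by apply: sym_connect_sym => x y; rewrite /level_rel /= e_sym eq_sym. Qed.

Definition clset x := [set y | same_cluster e v0 x y].

Lemma is_cluster_clset x : is_cluster e v0 (clset x).
Proof. by apply/existsP; exists x. Qed.

Definition cl x : cluster e v0 := exist _ (clset x) (is_cluster_clset x).

Lemma mem_cl x : x \in val (cl x).
Proof. by rewrite inE; apply: connect0. Qed.

Lemma cl_eqP x y : reflect (cl x = cl y) (same_cluster e v0 x y).
Proof.
apply: (iffP idP) => [xy|Exy]; last by have := mem_cl y; rewrite -Exy inE.
apply: val_inj; apply/setP => z; rewrite !inE.
exact: (same_connect same_cluster_sym xy z).
Qed.

Lemma cl_surj (C : cluster e v0) : exists x, C = cl x.
Proof.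
case: C => S HS; have /existsP[x /eqP ES] := HS.
by exists x; apply: val_inj.
Qed.

Lemma cluster_cl (C : cluster e v0) u : u \in val C -> C = cl u.
Proof. by have [x ->] := cl_surj C; rewrite inE => /cl_eqP. Qed.

Lemma cl_edge a b : e a b -> dist e v0 a = dist e v0 b -> cl a = cl b.
Proof.
by move=> eab Eab; apply/cl_eqP/connect1; rewrite /level_rel /= eab Eab eqxx.
Qed.

Lemma triangle_dist u x w : e u x -> e x w -> e u w ->
  [\/ dist e v0 u = dist e v0 w, dist e v0 u = dist e v0 x
     | dist e v0 x = dist e v0 w].
Proof.
move=> ux xw uw.
have xu : e x u by rewrite e_sym.
have wx : e w x by rewrite e_sym.
have wu : e w u by rewrite e_sym.
move: (dist_edge_le ux) (dist_edge_le xu) (dist_edge_le xw) (dist_edge_le wx)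
  (dist_edge_le uw) (dist_edge_le wu) => *.
have [?|/eqP ?] := eqVneq (dist e v0 u) (dist e v0 x); first exact: Or32.
have [?|/eqP ?] := eqVneq (dist e v0 x) (dist e v0 w); first exact: Or33.
have [?|/eqP ?] := eqVneq (dist e v0 u) (dist e v0 w); first exact: Or31.
exfalso; lia.
Qed.

Lemma cl_collapses_triangles : collapses_triangles e cl.
Proof.
move=> u x w /orP[/eqP->|ux]; first by move=> _ _; apply: Or32.
move=> /orP[/eqP<-|xw]; first by move=> _; apply: Or33.
move=> /orP[/eqP<-|uw]; first exact: Or31.
case: (triangle_dist ux xw uw) => E; [apply: Or31 | apply: Or32 | apply: Or33];
  exact: cl_edge E.
Qed.

Lemma connect_cl x y : connect e x y -> connect (cluster_adj e v0) (cl x) (cl y).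
Proof.
move=> /connectP[p + ->]; elim: p x => [|z p IH] x /=; first by rewrite connect0.
move=> /andP[exz /IH]; apply: connect_trans.
have [->|xz] := eqVneq (cl x) (cl z); first exact: connect0.
apply/connect1/andP; split=> //.
by apply/existsP; exists x; apply/existsP; exists z; rewrite !mem_cl exz.
Qed.

Lemma within_cluster_walk x y : cl x = cl y -> exists p,
  [/\ path (lstep e) x p, last x p = y & all (pred1 (cl x)) (map cl p)].
Proof.
move=> /cl_eqP/connectP[p + ->]; elim: p x => [|z p IH] x /=.
  by exists [::].
move=> /andP[xz /IH[q [Hq Lq Cq]]]; exists (z :: q).
have Exz : cl x = cl z by apply/cl_eqP/connect1.
move: xz => /andP[exz _].
by rewrite /= /lstep exz orbT Hq Lq Exz eqxx.
Qed.

Lemma cluster_path_lift C q x y : path (cluster_adj e v0) C q ->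
  cl x = C -> cl y = last C q -> exists p,
  [/\ path (lstep e) x p, last x p = y &
      forall A B, net_flow A B (cl x) (map cl p) = net_flow A B C q].
Proof.
elim: q C x => [|D q IH] C x /=.
  move=> _ <- /esym/within_cluster_walk[p [Hp Lp Cp]].
  by exists p; split=> // A B; apply: net_flow_const.
move=> /andP[/andP[_ /existsP[u /existsP[v /and3P[uC vD euv]]]] HD] Ex Ey.
have ECu := cluster_cl uC; have EDv := cluster_cl vD.
have [p1 [P1 L1 C1]] := within_cluster_walk (etrans Ex ECu).
have [p2 [P2 L2 F2]] := IH D v HD (esym EDv) Ey.
exists (p1 ++ v :: p2); split.
- by rewrite cat_path P1 L1 /= /lstep euv orbT P2.
- by rewrite last_cat L1.
move=> A B; rewrite map_cat net_flow_cat net_flow_const //= F2.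
by rewrite (last_map cl) L1 ECu EDv add0r.
Qed.

End Clusters.

Theorem mainTheorem3 (T : finType) (e : rel T) (v0 : T) :
  simple_graph e -> connected_graph e -> simply_connected e ->
  is_tree (cluster_adj e v0).
Proof.
move=> [e_sym _] e_conn e_sc; split.
  move=> C D; have [x ->] := cl_surj C; have [y ->] := cl_surj D.
  exact: connect_cl.
case=> -[|C1 [|C2 [|C3 ps]]] [] // _ C_uniq C_cycle.
have [x Ex] := cl_surj C1.
have x_last : cl e v0 x = last C1 (rcons [:: C2, C3 & ps] C1) by rewrite last_rcons.
have [p [p_path p_last p_flow]] := cluster_path_lift e_sym C_cycle (esym Ex) x_last.
have p_loop : is_loop e (x :: p) by exists x, p.
have := contractible_seq_flow (cl_collapses_triangles v0 e_sym e_conn) C1 C2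
  (e_sc _ p_loop).
by rewrite /= p_flow net_flow_cycle.
Qed.
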